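(* Let $B$ be a unital $C^*$-algebra with a $*$-isomorphism $\psi:B\to M_n\otimes B$ satisfying $\psi(1)=I_n\otimes1$, let $m\ge1$, and suppose that $A$ is a maximal abelian $*$-subalgebra of $B$ with $\sigma_m(A)\subset A$. Then $\chi_{mij}(A)\subset A$ for all $1\le i,j\le n$.
   Context: $M_n=M_n(\mathbb{C})$, matrix units $E_{kl}$, identity $I_n$. Define $\psi_0=\mathrm{id}_B$, $\psi_{m+1}=(\mathrm{id}^{\otimes m}\otimes\psi)\circ\psi_m:B\to M_n^{\otimes(m+1)}\otimes B$. With $f(b)=I_n\otimes b$, for $m\ge1$ let $\sigma_m=\psi_m^{-1}\circ(\mathrm{id}^{\otimes(m-1)}\otimes f)\circ\psi_{m-1}:B\to B$. Let $e_{ij}:M_n\to\mathbb{C}$ be the linear functional $e_{ij}(E_{kl})=\delta_{ik}\delta_{jl}$, and for $m\ge1$ let $\chi_{mij}=\psi_{m-1}^{-1}\circ(\mathrm{id}^{\otimes(m-1)}\otimes e_{ij}\otimes\mathrm{id}_B)\circ\psi_m:B\to B$ (slice map on the $m$-th tensor factor). *)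

From HB Require Import structures.
From mathcomp Require Import all_boot all_algebra.
From mathcomp Require Import complex reals.
Set Implicit Arguments. Unset Strict Implicit. Unset Printing Implicit Defensive.
Import GRing.Theory Num.Theory.
Local Open Scope ring_scope.

Section Defs.
Variable R : realType.
Local Notation C := (R[i]).

Definition is_involution (B : algType C) (star : B -> B) : Prop :=
  [/\ (forall x, star (star x) = x),
      (forall x y, star (x + y) = star x + star y),
      (forall (a : C) x, star (a *: x) = (a^*)%C *: star x)
    & (forall x y, star (x * y) = star y * star x)].

Definition is_Cstar_norm (B : algType C) (star : B -> B) (nrm : B -> R) : Prop :=
  [/\ (forall x, 0 <= nrm x /\ (nrm x = 0 -> x = 0)),
      (forall x y, nrm (x + y) <= nrm x + nrm y),
      (forall (a : C) x, nrm (a *: x) = ComplexField.Normc.normc a * nrm x),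
      (forall x y, nrm (x * y) <= nrm x * nrm y)
    & (forall x, nrm (star x * x) = nrm x ^+ 2)].

Definition is_complete_norm (B : algType C) (nrm : B -> R) : Prop :=
  forall u : nat -> B,
    (forall e : R, 0 < e -> exists N, forall p q, (N <= p)%N -> (N <= q)%N ->
         nrm (u p - u q) < e) ->
    exists l, forall e : R, 0 < e -> exists N, forall p, (N <= p)%N ->
         nrm (u p - l) < e.

Definition is_unital_Cstar (B : algType C) (star : B -> B) (nrm : B -> R) : Prop :=
  [/\ is_involution star, is_Cstar_norm star nrm & is_complete_norm nrm].

Variable B : algType C.
Variable star : B -> B.
Variable n : nat.

(** M_n (x) B is identified with n x n matrices over B; its adjoint is the
    conjugate transpose with entrywise [star]. *)
Definition mx_star (X : 'M[B]_n) : 'M[B]_n := \matrix_(i, j) star (X j i).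

Definition is_star_iso_unital (psi : B -> 'M[B]_n) : Prop :=
  [/\ (forall x y, psi (x + y) = psi x + psi y) /\
         (forall (a : C) x, psi (a *: x) = map_mx (fun y : B => a *: y) (psi x)),
      (forall x y, psi (x * y) = psi x *m psi y),
      (forall x, psi (star x) = mx_star (psi x)),
      bijective psi
    & psi 1 = 1%:M].

(** Elements of M_n^{(x) k} (x) B: the element
      sum_{r,c} E_{r_k c_k} (x) ... (x) E_{r_1 c_1} (x) X r c
    is encoded by its coefficient function X : k-tuples -> k-tuples -> B.
    The HEAD of the index tuples is the LAST (k-th) tensor factor M_n,
    i.e. the one adjacent to B. *)
Definition tens (k : nat) := k.-tuple 'I_n -> k.-tuple 'I_n -> B.

Variable psi : B -> 'M[B]_n.

Local Unset Implicit Arguments.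
(** psi_0 = id_B, psi_{m+1} = (id^{(x) m} (x) psi) o psi_m. *)
Fixpoint psi_it (m : nat) : B -> tens m :=
  match m return B -> tens m with
  | 0 => fun b _ _ => b
  | S k => fun b r c =>
      psi (psi_it k b (behead_tuple r) (behead_tuple c)) (thead r) (thead c)
  end.
Local Set Implicit Arguments.

(** id^{(x) k} (x) f with f(b) = I_n (x) b : M_n^{(x) k}(x)B -> M_n^{(x) k+1}(x)B *)
Definition lift_f (k : nat) (X : tens k) : tens k.+1 :=
  fun r c => if thead r == thead c then X (behead_tuple r) (behead_tuple c) else 0.

(** id^{(x) k} (x) e_ij (x) id_B : slice map on the (k+1)-th factor. *)
Definition slice (i j : 'I_n) (k : nat) (Y : tens k.+1) : tens k :=
  fun r c => Y [tuple of i :: r] [tuple of j :: c].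

(** Image of a set under sigma_m = psi_m^{-1} o (id^{(x)(m-1)} (x) f) o psi_{m-1}
    (for m >= 1), written as the preimage under psi_m of the image. *)
Definition sigma_image (m : nat) (A : B -> Prop) : B -> Prop :=
  match m with
  | 0 => A
  | S k => fun b => exists2 a, A a & psi_it k.+1 b = lift_f (psi_it k a)
  end.

(** Image of a set under chi_{mij} = psi_{m-1}^{-1} o (id (x) e_ij (x) id) o psi_m. *)
Definition chi_image (m : nat) (i j : 'I_n) (A : B -> Prop) : B -> Prop :=
  match m with
  | 0 => A
  | S k => fun b => exists2 a, A a & psi_it k b = slice i j (psi_it k.+1 a)
  end.

Definition is_star_subalg (A : B -> Prop) : Prop :=
  [/\ A 0,
      (forall x y, A x -> A y -> A (x + y)),
      (forall (a : C) x, A x -> A (a *: x)),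
      (forall x y, A x -> A y -> A (x * y))
    & (forall x, A x -> A (star x))].

Definition is_abelian (A : B -> Prop) : Prop :=
  forall x y, A x -> A y -> x * y = y * x.

Definition is_masa (A : B -> Prop) : Prop :=
  [/\ is_star_subalg A, is_abelian A &
      forall A' : B -> Prop, is_star_subalg A' -> is_abelian A' ->
        (forall x, A x -> A' x) -> forall x, A' x -> A x].

End Defs.

(* Let b = chi_{m,ij}(a) with a in A, and let c be in A.  Then
   d := sigma_m(c) lies in A, and psi_m(d) = I_n (x) psi_{m-1}(c).
   Slicing the m-th factor commutes with multiplication by such elements, so
     psi_{m-1}(b c) = slice_ij(psi_m(a) psi_m(d)) = slice_ij(psi_m(a d)),
     psi_{m-1}(c b) = slice_ij(psi_m(d) psi_m(a)) = slice_ij(psi_m(d a)),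
   and since A is abelian, b commutes with A.  A maximal abelian *-subalgebra
   contains every x commuting with it: x + x' and i (x - x'), with x' the
   adjoint of x, are self-adjoint, so each generates together with A an
   abelian *-subalgebra, and maximality puts them in A. *)

From HB Require Import structures.
From mathcomp Require Import all_boot all_algebra.
From mathcomp Require Import complex reals.
From mathcomp Require Import boolp.
Set Implicit Arguments. Unset Strict Implicit. Unset Printing Implicit Defensive.
Import GRing.Theory Num.Theory.
Local Open Scope ring_scope.

Section MasaCommutant.
Variables (R : realType) (B : algType R[i]) (star : B -> B) (A : B -> Prop).
Hypothesis star_inv : is_involution star.
Hypothesis A_masa : is_masa star A.

Lemma starK x : star (star x) = x.
Proof. by case: star_inv. Qed.

Lemma starD x y : star (x + y) = star x + star y.
Proof. by case: star_inv. Qed.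

Lemma starZ (a : R[i]) x : star (a *: x) = a^* *: star x.
Proof. by case: star_inv. Qed.

Lemma starM x y : star (x * y) = star y * star x.
Proof. by case: star_inv. Qed.

Lemma starN x : star (- x) = - star x.
Proof. by rewrite -scaleN1r starZ rmorphN1 scaleN1r. Qed.

Lemma star_commute x y : x * star y = star y * x -> star x * y = y * star x.
Proof. by move=> /(congr1 star); rewrite !starM starK. Qed.

Inductive adjoin (h : B) : B -> Prop :=
| adjoin_A a : A a -> adjoin h a
| adjoin_gen : adjoin h h
| adjoinD x y : adjoin h x -> adjoin h y -> adjoin h (x + y)
| adjoinZ (a : R[i]) x : adjoin h x -> adjoin h (a *: x)
| adjoinM x y : adjoin h x -> adjoin h y -> adjoin h (x * y)
| adjoin_star x : adjoin h x -> adjoin h (star x).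

Lemma adjoin_star_subalg h : is_star_subalg star (adjoin h).
Proof.
case: A_masa => -[A0 _ _ _ _] _ _.
split; [exact: adjoin_A | exact: adjoinD | exact: adjoinZ | exact: adjoinM |].
exact: adjoin_star.
Qed.

Lemma adjoin_comm h (S : B -> Prop) :
    (forall s, S s -> S (star s)) ->
    (forall a s, A a -> S s -> a * s = s * a) ->
    (forall s, S s -> h * s = s * h) ->
  forall y s, adjoin h y -> S s -> y * s = s * y.
Proof.
move=> S_star AS_comm hS_comm y s adj_y; elim: adj_y s => {y}.
- by move=> a Aa s Ss; apply: AS_comm.
- exact: hS_comm.
- by move=> x y _ IHx _ IHy s Ss; rewrite mulrDl mulrDr IHx ?IHy.
- by move=> c x _ IH s Ss; rewrite -scalerAl -scalerAr IH.
- by move=> x y _ IHx _ IHy s Ss; rewrite -mulrA IHy // mulrA IHx // mulrA.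
- by move=> x _ IH s Ss; apply: star_commute; apply: IH; apply: S_star.
Qed.

Lemma adjoin_abelian h :
  star h = h -> (forall a, A a -> h * a = a * h) -> is_abelian (adjoin h).
Proof.
move=> h_sa hA_comm.
case: A_masa => -[_ _ _ _ A_star] A_ab _.
have adjoin_comm_Ah : forall y s, adjoin h y -> A s \/ s = h -> y * s = s * y.
  apply: adjoin_comm => [s [/A_star As|->] | a s Aa [As|->] | s [As|->]] //.
  - by left.
  - by right.
  - exact: A_ab.
  - by rewrite hA_comm.
  - exact: hA_comm.
move=> y s adj_y adj_s; apply: adjoin_comm adj_y adj_s.
- exact: adjoin_star.
- by move=> a {}s Aa adj_s; rewrite (adjoin_comm_Ah s a) //; left.
- by move=> {}s adj_s; rewrite (adjoin_comm_Ah s h) //; right.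
Qed.

Lemma selfadjoint_commutant_mem_masa h :
  star h = h -> (forall a, A a -> h * a = a * h) -> A h.
Proof.
move=> h_sa hA_comm; case: A_masa => _ _ A_max.
apply: (A_max (adjoin h)); last exact: adjoin_gen.
- exact: adjoin_star_subalg.
- exact: adjoin_abelian.
- exact: adjoin_A.
Qed.

Lemma commutant_mem_masa x : (forall a, A a -> x * a = a * x) -> A x.
Proof.
move=> xA_comm; case: A_masa => -[_ AD AZ _ A_star] _ _.
have starxA_comm a : A a -> star x * a = a * star x.
  by move=> Aa; apply: star_commute; rewrite xA_comm //; apply: A_star.
set re := x + star x; set im := 'i *: (x - star x).
have A_re : A re.
  apply: selfadjoint_commutant_mem_masa => [|a Aa].
    by rewrite starD starK addrC.
  by rewrite mulrDl mulrDr xA_comm // starxA_comm.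
have A_im : A im.
  apply: selfadjoint_commutant_mem_masa => [|a Aa].
    by rewrite starZ starD starN starK conjCi scaleNr -scalerN opprB.
  by rewrite -scalerAl -scalerAr mulrBl mulrBr xA_comm // starxA_comm.
suff -> : x = 2^-1 *: re + (- 2^-1 * 'i) *: im by apply: AD; apply: AZ.
rewrite /re /im scalerA -mulrA -expr2 sqrCi mulrN1 opprK -scalerDr.
rewrite addrACA subrr addr0 -mulr2n -[x *+ 2]scaler_nat scalerA mulVf ?scale1r //.
by rewrite pnatr_eq0.
Qed.

End MasaCommutant.

Section IteratedTensor.
Variables (R : realType) (B : algType R[i]) (n : nat).

Definition tens_mul k (X Y : tens B n k) : tens B n k :=
  fun r c => \sum_(t : k.-tuple 'I_n) X r t * Y t c.

Lemma tens_ext k (X Y : tens B n k) : (forall r c, X r c = Y r c) -> X = Y.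
Proof. by move=> XY; apply: funext => r; apply: funext => c. Qed.

Lemma behead_tuple_cons k (s : 'I_n) (t : k.-tuple 'I_n) :
  behead_tuple [tuple of s :: t] = t.
Proof. exact: val_inj. Qed.

Lemma big_tuple_cons k (F : k.+1.-tuple 'I_n -> B) :
  \sum_(u : k.+1.-tuple 'I_n) F u =
  \sum_(s : 'I_n) \sum_(t : k.-tuple 'I_n) F [tuple of s :: t].
Proof.
rewrite pair_big.
rewrite (reindex (fun p : 'I_n * k.-tuple 'I_n => [tuple of p.1 :: p.2])) //=.
exists (fun u => (thead u, behead_tuple u)) => [[s t] _ | u _] /=.
  by rewrite theadE behead_tuple_cons.
by rewrite [RHS]tuple_eta.
Qed.

Lemma slice_mul_lift_fr (i j : 'I_n) k (X : tens B n k.+1) (Y : tens B n k) :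
  slice i j (tens_mul X (lift_f Y)) = tens_mul (slice i j X) Y.
Proof.
apply: tens_ext => r c; rewrite /slice /tens_mul big_tuple_cons (bigD1 j) //=.
rewrite [X in _ + X]big1 ?addr0 => [|s /negbTE s_neq_j].
  by apply: eq_bigr => t _; rewrite /lift_f !theadE eqxx !behead_tuple_cons.
by apply: big1 => t _; rewrite /lift_f !theadE s_neq_j mulr0.
Qed.

Lemma slice_mul_lift_fl (i j : 'I_n) k (X : tens B n k.+1) (Y : tens B n k) :
  slice i j (tens_mul (lift_f Y) X) = tens_mul Y (slice i j X).
Proof.
apply: tens_ext => r c; rewrite /slice /tens_mul big_tuple_cons (bigD1 i) //=.
rewrite [X in _ + X]big1 ?addr0 => [|s /negbTE s_neq_i].
  by apply: eq_bigr => t _; rewrite /lift_f !theadE eqxx !behead_tuple_cons.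
by apply: big1 => t _; rewrite /lift_f !theadE eq_sym s_neq_i mul0r.
Qed.

Variable psi : B -> 'M[B]_n.
Hypothesis psiD : forall x y, psi (x + y) = psi x + psi y.
Hypothesis psiM : forall x y, psi (x * y) = psi x *m psi y.
Hypothesis psi_bij : bijective psi.

Local Notation psi_ := (psi_it R B n psi).

Lemma psi_itM k x y : psi_ k (x * y) = tens_mul (psi_ k x) (psi_ k y).
Proof.
have psi0 : psi 0 = 0 by apply: (addrI (psi 0)); rewrite -psiD !addr0.
elim: k x y => [|k IH] x y; apply: tens_ext => r c /=.
  by rewrite /tens_mul big_const card_tuple expn0 /= addr0.
rewrite IH (big_morph psi psiD psi0) summxE /tens_mul big_tuple_cons exchange_big.
apply: eq_bigr => t _; rewrite psiM mxE; apply: eq_bigr => s _.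
by rewrite !theadE !behead_tuple_cons.
Qed.

Lemma psi_it_inj k : injective (psi_ k).
Proof.
elim: k => [|k IH] x y psi_xy.
  exact: (congr1 (fun X => X [tuple] [tuple]) psi_xy).
apply: IH; apply: tens_ext => r c; apply: (bij_inj psi_bij).
apply/matrixP => s t.
have := congr1 (fun X => X [tuple of s :: r] [tuple of t :: c]) psi_xy.
by rewrite /= !theadE !behead_tuple_cons.
Qed.

Lemma psi_it_surj k (Y : tens B n k) : exists d, psi_ k d = Y.
Proof.
elim: k Y => [|k IH] Y.
  exists (Y [tuple] [tuple]); apply: tens_ext => r c.
  by rewrite /= (tuple0 r) (tuple0 c).
case: psi_bij => psi_inv psiK psi_invK.
have [d psi_d] :=
  IH (fun r c => psi_inv (\matrix_(s, t) Y [tuple of s :: r] [tuple of t :: c])).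
exists d; apply: tens_ext => r c /=.
by rewrite psi_d psi_invK mxE -!tuple_eta.
Qed.

End IteratedTensor.

Theorem corollary3p3 (R : realType) (B : algType R[i]) (star : B -> B)
  (nrm : B -> R) (n : nat) (psi : B -> 'M[B]_n) (A : B -> Prop) (m : nat) :
  is_unital_Cstar star nrm ->
  is_star_iso_unital star psi ->
  (1 <= m)%N ->
  is_masa star A ->
  (forall b, sigma_image psi m A b -> A b) ->
  forall i j : 'I_n, forall b, chi_image psi m i j A b -> A b.
Proof.
move=> [star_inv _ _] [[psiD _] psiM _ psi_bij _] m_gt0 A_masa sigmaA i j b.
case: m m_gt0 sigmaA => // k _ sigmaA /= [a Aa psi_b].
apply: (commutant_mem_masa star_inv A_masa) => c Ac.
have [d psi_d] := psi_it_surj psi_bij (lift_f (psi_it R B n psi k c)).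
have Ad : A d by apply: sigmaA; exists c.
have ad_comm : a * d = d * a by case: A_masa => _ /(_ a d Aa Ad).
apply: (psi_it_inj (k := k) psi_bij).
rewrite !(psi_itM psiD psiM) psi_b.
rewrite -slice_mul_lift_fr -slice_mul_lift_fl -psi_d.
by rewrite -!(psi_itM psiD psiM) ad_comm.
Qed.
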